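(* The Lie algebra $\Lambda(\mathbb{Q}\mathrm{Tree}_2^-)$ is not finitely generated.
   Context: A nonsymmetric operad of sets $\mathcal{C}$ consists of sets $\mathcal{C}((m))$, $m\ge 0$, a unit $1\in\mathcal{C}((1))$, and partial compositions $c\circ_s d\in\mathcal{C}((k+j-1))$ for $c\in\mathcal{C}((k))$, $1\le s\le k$, $d\in\mathcal{C}((j))$, satisfying the usual associativity and unit axioms. Write $\mathbb{Q}\mathcal{C}((m))$ for the free $\mathbb{Q}$-vector space on $\mathcal{C}((m))$. The Lie algebra $\Lambda(\mathbb{Q}\mathcal{C})=\bigoplus_{m\ge0}\mathbb{Q}\mathcal{C}((m))$ has bracket, for $c\in\mathcal{C}((k))$, $d\in\mathcal{C}((j))$, $[c,d]=\sum_{t=1}^{j} d\circ_t c-\sum_{s=1}^{k} c\circ_s d$, extended bilinearly. $\mathrm{Tree}_2((m))$, $m\ge1$, is the set of planar binary rooted trees with one root at the bottom and $m$ leaves at the top labeled $1,\dots,m$ from left to right (each internal vertex has exactly two inputs); equivalently, full parenthesizations of the word $12\cdots m$, e.g. $\mathrm{Tree}_2((1))=\{1\}$ (trivial tree), $\mathrm{Tree}_2((2))=\{(12)\}$, $\mathrm{Tree}_2((3))=\{((12)3),(1(23))\}$. The composition $S\circ_i T$ grafts the root of $T$ onto the $i$-th leaf of $S$. For $c\in\mathrm{Tree}_2((m))$, $m\ge2$, the face $\partial_i c\in\mathrm{Tree}_2((m-1))$ is obtained by erasing the $i$-th leaf (and suppressing the resulting vertex with one input), e.g. $\partial_i((12)3)=\partial_i(1(23))=(12)$.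 The nonsymmetric operad $\mathrm{Tree}_2^-$ has $\mathrm{Tree}_2^-((0))=\{\circ\}$ a singleton, $\mathrm{Tree}_2^-((m))=\mathrm{Tree}_2((m))$ for $m\ge1$, with the grafting compositions and additionally $c\circ_i\circ=\partial_i c$ for $m\ge2$ and $1\circ_1\circ=\circ$. *)

(* with multinomials' monoid algebras {malg R[K]} used as
   the free Q-vector space on a (choice) type K. *)
From HB Require Import structures.
From mathcomp Require Import all_boot all_order all_algebra.
From mathcomp Require Import finmap.
From mathcomp.multinomials Require Import monalg.

Set Implicit Arguments.
Unset Strict Implicit.
Unset Printing Implicit Defensive.
Import GRing.Theory.
Local Open Scope ring_scope.

(* Planar binary rooted trees; Leaf is the trivial tree 1 (one leaf). *)
Inductive btree : Type := Leaf | Node of btree & btree.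

Fixpoint btree_enc (t : btree) : GenTree.tree unit :=
  match t with
  | Leaf => GenTree.Leaf tt
  | Node l r => GenTree.Node 0 [:: btree_enc l; btree_enc r]
  end.

Fixpoint btree_dec (g : GenTree.tree unit) : option btree :=
  match g with
  | GenTree.Leaf _ => Some Leaf
  | GenTree.Node _ [:: a; b] =>
      match btree_dec a, btree_dec b with
      | Some l, Some r => Some (Node l r)
      | _, _ => None
      end
  | GenTree.Node _ _ => None
  end.

Lemma btree_encK : pcancel btree_enc btree_dec.
Proof. by elim=> [|l IHl r IHr] //=; rewrite IHl IHr. Qed.

HB.instance Definition _ := Countable.copy btree (pcan_type btree_encK).

Fixpoint leaves (t : btree) : nat :=
  match t with Leaf => 1%N | Node l r => (leaves l + leaves r)%N end.

(* graft t d s : graft the root of d onto the s-th leaf (1-based) of t *)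
Fixpoint graft (t : btree) (s : nat) (d : btree) : btree :=
  match t with
  | Leaf => d
  | Node l r =>
      if (s <= leaves l)%N then Node (graft l s d) r
      else Node l (graft r (s - leaves l) d)
  end.

(* erase the s-th leaf (1-based) of t and suppress the resulting unary
   vertex; erasing the only leaf of the trivial tree gives None (= the
   nullary element of Tree_2^-). For t with >= 2 leaves this is the face. *)
Fixpoint erase (t : btree) (s : nat) : option btree :=
  match t with
  | Leaf => None
  | Node l r =>
      if (s <= leaves l)%N then
        match erase l s with None => Some r | Some l' => Some (Node l' r) end
      else
        match erase r (s - leaves l) with
        | None => Some l | Some r' => Some (Node l r') end
  end.

(* Operations of the nonsymmetric operad Tree_2^- :
   None = the nullary element (circle), Some t = a tree with leaves t inputs. *)
Definition top := option btree.

Definition tarity (c : top) : nat :=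
  match c with None => 0%N | Some t => leaves t end.

(* partial composition c o_s d  (meaningful for 1 <= s <= tarity c) *)
Definition tcomp (c : top) (s : nat) (d : top) : top :=
  match c with
  | None => None
  | Some t => match d with
              | Some u => Some (graft t s u)
              | None => erase t s
              end
  end.

Definition Lam := {malg rat[top]}.

Definition brb (c d : top) : Lam :=
  \sum_(1 <= t < (tarity d).+1) << tcomp d t c >>
  - \sum_(1 <= s < (tarity c).+1) << tcomp c s d >>.

Definition lbracket (x y : Lam) : Lam :=
  \sum_(a <- msupp x) \sum_(b <- msupp y) (x@_a * y@_b) *: brb a b.

Inductive lie_gen (S : seq Lam) : Lam -> Prop :=
  | lg_base x : x \in S -> lie_gen S x
  | lg_zero : lie_gen S 0
  | lg_add x y : lie_gen S x -> lie_gen S y -> lie_gen S (x + y)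
  | lg_scale (a : rat) x : lie_gen S x -> lie_gen S (a *: x)
  | lg_br x y : lie_gen S x -> lie_gen S y -> lie_gen S (lbracket x y).

Definition lie_fin_gen : Prop := exists S : seq Lam, forall x : Lam, lie_gen S x.

From HB Require Import structures.
From mathcomp Require Import all_boot all_order all_algebra.
From mathcomp Require Import finmap.
From mathcomp.multinomials Require Import monalg.
From mathcomp Require Import zify ring.

Set Implicit Arguments.
Unset Strict Implicit.
Unset Printing Implicit Defensive.
Import GRing.Theory.

(* Let delta = [o, -] be the bracket with the nullary operation o.  It is a
   derivation of the bracket and never increases arity.  For n > 0, the
   coefficient of the left comb c with n + 1 leaves in [x, y] is
     n (x_1 y_c - x_c y_1) + x_o (delta y)_c - y_o (delta x)_c,
   where 1 is the trivial tree.  Hence the elements x with (delta^k x)_c = 0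
   for all k form a Lie subalgebra; it contains every element of arity at
   most n, so no finite family generates the whole Lie algebra. *)

Lemma leaves_gt0 t : 0 < leaves t.
Proof. by elim: t => //= l IH r _; rewrite addn_gt0 IH. Qed.

Lemma leaves_graft b t a : leaves (graft b t a) = leaves b + leaves a - 1.
Proof.
elim: b t => [|l IHl r IHr] t /=; first lia.
have := leaves_gt0 a; have := leaves_gt0 l; have := leaves_gt0 r.
by case: ifP => _ /=; [rewrite IHl | rewrite IHr]; lia.
Qed.

Lemma graft_Leaf b t : graft b t Leaf = b.
Proof. by elim: b t => [|l IHl r IHr] t //=; case: ifP; rewrite ?IHl ?IHr. Qed.

Lemma erase_eq_None b s : erase b s = None -> b = Leaf.
Proof.
by case: b => //= l r; case: ifP; [case: (erase l s) | case: (erase r _)].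
Qed.

Lemma tarity_erase b s : tarity (erase b s) = (leaves b).-1.
Proof.
elim: b s => [|l IHl r IHr] s //=.
have := leaves_gt0 l; have := leaves_gt0 r.
case: ifP => _.
  case E: (erase l s) => [l'|] /=; last by rewrite (erase_eq_None E) /=; lia.
  by have := IHl s; rewrite E /= => ->; lia.
case E: (erase r _) => [r'|] /=; last by rewrite (erase_eq_None E) /=; lia.
by have := IHr (s - leaves l); rewrite E /= => ->; lia.
Qed.

Lemma erase_graft_before b a t u : 1 <= u < t -> t <= leaves b ->
  erase (graft b t a) u = tcomp (erase b u) t.-1 (Some a).
Proof.
elim: b t u => [|l IHl r IHr] t u /=; first lia.
move=> /andP[u_gt0 ut] tb.
have a_gt0 := leaves_gt0 a; have l_gt0 := leaves_gt0 l; have r_gt0 := leaves_gt0 r.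
case: (leqP t (leaves l)) => tl /=.
  rewrite leaves_graft ifT; last lia.
  rewrite IHl ?u_gt0 // ifT; last lia.
  case E: (erase l u) => [l'|] /=; last by rewrite (erase_eq_None E) /= in tl; lia.
  have := tarity_erase l u; rewrite E /= => l'E.
  by rewrite ifT //; lia.
case: (leqP u (leaves l)) => ul.
  case E: (erase l u) => [l'|] /=; last first.
    by rewrite (erase_eq_None E) /=; do 3 f_equal; lia.
  have := tarity_erase l u; rewrite E /= => l'E.
  by rewrite ifF; [do 3 f_equal|]; lia.
rewrite IHr; [|lia|lia].
case E: (erase r (u - leaves l)) => [r'|] /=; last first.
  by rewrite (erase_eq_None E) /= in tb; lia.
have := tarity_erase r (u - leaves l); rewrite E /= => r'E.
by rewrite ifF; [do 3 f_equal|]; lia.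
Qed.

Lemma erase_graft_within b a t s : 1 <= t <= leaves b -> 1 <= s <= leaves a ->
  erase (graft b t a) (t + s - 1) = tcomp (Some b) t (erase a s).
Proof.
elim: b t => [|l IHl r IHr] t /= tb sa.
  have -> : t = 1 by lia.
  by rewrite add1n subn1 /=; case: (erase a s).
have a_gt0 := leaves_gt0 a; have l_gt0 := leaves_gt0 l; have r_gt0 := leaves_gt0 r.
case: (leqP t (leaves l)) => tl /=.
  rewrite leaves_graft ifT; last lia.
  by rewrite IHl; [case: (erase a s) => //= a'; rewrite tl | lia | lia].
rewrite ifF; last lia.
have -> : t + s - 1 - leaves l = t - leaves l + s - 1 by lia.
rewrite IHr; [|lia|lia].
by case: (erase a s) => //= a'; rewrite ifF //; lia.
Qed.

Lemma erase_graft_after b a t x : 1 <= t < x -> x <= leaves b ->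
  erase (graft b t a) (x + leaves a - 1) = tcomp (erase b x) t (Some a).
Proof.
elim: b t x => [|l IHl r IHr] t x /=; first lia.
move=> /andP[t_gt0 tx] xb.
have a_gt0 := leaves_gt0 a; have l_gt0 := leaves_gt0 l; have r_gt0 := leaves_gt0 r.
case: (leqP t (leaves l)) => tl /=.
  rewrite leaves_graft.
  case: (leqP x (leaves l)) => xl.
    rewrite !ifT; try lia.
    rewrite IHl ?t_gt0 //.
    case E: (erase l x) => [l'|] /=; last by rewrite (erase_eq_None E) /= in xl; lia.
    have := tarity_erase l x; rewrite E /= => l'E.
    by rewrite ifT //; lia.
  rewrite !ifF; try lia.
  have -> : x + leaves a - 1 - (leaves l + leaves a - 1) = x - leaves l by lia.
  by case: (erase r (x - leaves l)) => //= r'; rewrite ifT.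
rewrite !ifF; try lia.
have -> : x + leaves a - 1 - leaves l = x - leaves l + leaves a - 1 by lia.
rewrite IHr; [|lia|lia].
case E: (erase r (x - leaves l)) => [r'|] /=; last first.
  by rewrite (erase_eq_None E) /= in xb; lia.
have := tarity_erase r (x - leaves l); rewrite E /= => r'E.
by rewrite ifF; [do 3 f_equal|]; lia.
Qed.

Fixpoint comb n : btree := if n is n'.+1 then Node (comb n') Leaf else Leaf.

Fixpoint is_comb t : bool :=
  if t is Node l r then is_comb l && (r == Leaf) else true.

Lemma leaves_comb n : leaves (comb n) = n.+1.
Proof. by elim: n => //= n ->; rewrite addn1. Qed.

Lemma is_comb_comb n : is_comb (comb n).
Proof. by elim: n => //= n ->. Qed.

Lemma eq_comb t n : (t == comb n) = is_comb t && (leaves t == n.+1).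
Proof.
apply/eqP/andP => [-> | []]; first by rewrite is_comb_comb leaves_comb.
elim: t n => [|l IHl r _] [|n] //=.
- by move=> _ /eqP; have := leaves_gt0 l; have := leaves_gt0 r; lia.
- by move=> /andP[cl /eqP->]; rewrite addn1 eqSS => /(IHl n cl)->.
Qed.

Lemma graft_eq_Leaf b t a : a != Leaf -> (graft b t a == Leaf) = false.
Proof. by case: b => [|l r] /= aL; [apply/negbTE | case: ifP]. Qed.

Lemma is_comb_graft b t a : 1 <= t <= leaves b -> a != Leaf ->
  is_comb (graft b t a) = [&& is_comb b, is_comb a & t == 1].
Proof.
elim: b t => [|l IHl r IHr] t /= tb aL.
  by rewrite (_ : t = 1) ?andbT //; lia.
have := leaves_gt0 l.
case: ifP => tl /= l_gt0.
  by rewrite IHl ?aL //; [rewrite -!andbA; do 3 bool_congr | lia].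
by rewrite graft_eq_Leaf // (_ : t == 1 = false) ?andbF //; apply/eqP; lia.
Qed.

Local Open Scope ring_scope.

(* Reindex the pairs [(u, t)] with [u <> t] by [(u, t - (u < t))]. *)
Lemma sum_nat_offdiag (V : zmodType) (F : nat -> nat -> V) j :
  \sum_(1 <= t < j.+1) (\sum_(1 <= u < t) F u t.-1 + \sum_(t.+1 <= x < j.+1) F x t)
  = \sum_(1 <= x < j.+1) \sum_(1 <= y < j) F x y.
Proof.
elim: j => [|j IH]; first by rewrite !big_geq.
case: (posnP j) => [-> | j_gt0]; first by rewrite !big_nat1 !big_geq // addr0.
rewrite big_nat_recr //= [in X in _ + X](@big_geq _ _ _ j.+2) // addr0.
rewrite (@eq_big_nat _ _ _ 1 j.+1 _ (fun t =>
   (\sum_(1 <= u < t) F u t.-1 + \sum_(t.+1 <= x < j.+1) F x t) + F j.+1 t)); last first.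
  by move=> t /andP[_ tj]; rewrite [in LHS](big_nat_recr j.+1) //= addrA.
rewrite big_split /= IH [in RHS]big_nat_recr //=.
rewrite (@eq_big_nat _ _ _ 1 j.+1 (fun x => \sum_(1 <= y < j.+1) F x y)
   (fun x => \sum_(1 <= y < j) F x y + F x j)); last first.
  by move=> x _; rewrite big_nat_recr.
by rewrite big_split /= -!addrA [X in _ + X]addrC.
Qed.

Section LinearExtension.
Variables (K : choiceType) (R : comNzRingType) (V : lmodType R).
Implicit Types (F G : K -> V) (x y : {malg R[K]}).

Definition lin F x : V := \sum_(a <- msupp x) x@_a *: F a.

Lemma linEw F x (d : {fset K}) : (msupp x `<=` d)%fset ->
  lin F x = \sum_(a <- d) x@_a *: F a.
Proof.
move=> le; rewrite /lin (big_fset_incl _ le) //= => a _ /mcoeff_outdom ->.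
by rewrite scale0r.
Qed.

Lemma lin_is_linear F : linear (lin F).
Proof.
move=> c x y; set d := (msupp x `|` msupp y)%fset.
rewrite (@linEw F (c *: x + y) d); last first.
  by rewrite (fsubset_trans (msuppD_le _ _)) // fsetSU // msuppZ_le.
rewrite (@linEw F x d) ?fsubsetUl // (@linEw F y d) ?fsubsetUr //.
rewrite scaler_sumr -big_split; apply: eq_bigr => a _.
by rewrite mcoeffD mcoeffZ scalerDl scalerA.
Qed.

HB.instance Definition _ F :=
  GRing.isLinear.Build R {malg R[K]} V _ (lin F) (lin_is_linear F).

Lemma linB F : {morph lin F : x y / x - y}.
Proof. exact: raddfB. Qed.

Lemma lin_sum F I (r : seq I) (P : pred I) (G : I -> {malg R[K]}) :
  lin F (\sum_(i <- r | P i) G i) = \sum_(i <- r | P i) lin F (G i).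
Proof. exact: raddf_sum. Qed.

Lemma linU F a : lin F << a >> = F a.
Proof.
by rewrite (@linEw F _ [fset a]%fset) ?msuppU_le // big_seq_fset1 mcoeffUU scale1r.
Qed.

Lemma eq_lin F G : F =1 G -> lin F =1 lin G.
Proof. by move=> eFG x; apply: eq_bigr => a _; rewrite eFG. Qed.

Lemma lin_funP c F G x :
  lin (fun a => c *: F a + G a) x = c *: lin F x + lin G x.
Proof.
rewrite /lin scaler_sumr -big_split; apply: eq_bigr => a _.
by rewrite scalerDr !scalerA mulrC.
Qed.

Lemma malgU_scale c a : << c *g a >> = c *: << a >> :> {malg R[K]}.
Proof. by apply/malgP => k; rewrite mcoeffZ !mcoeffU mulrnAr mulr1. Qed.

Lemma linear_lin (f : {malg R[K]} -> V) : linear f -> f =1 lin (fun a => f << a >>).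
Proof.
move=> fL x; pose g : {linear {malg R[K]} -> V} := HB.pack f (GRing.isLinear.Build _ _ _ _ f fL).
have -> : f x = g x by [].
rewrite [x in g x]monalgE linear_sum; apply: eq_bigr => a _.
by rewrite malgU_scale linearZ.
Qed.

Lemma eq_bilinear (f g : {malg R[K]} -> {malg R[K]} -> V) :
  (forall y, linear (f^~ y)) -> (forall x, linear (f x)) ->
  (forall y, linear (g^~ y)) -> (forall x, linear (g x)) ->
  (forall a b, f << a >> << b >> = g << a >> << b >>) -> forall x y, f x y = g x y.
Proof.
move=> fl fr gl gr fg x y.
rewrite (linear_lin (fl y)) (linear_lin (gl y)); apply: eq_lin => a.
by rewrite (linear_lin (fr _)) (linear_lin (gr _)); apply: eq_lin => b.
Qed.

End LinearExtension.

Definition faces (c : top) : Lam := \sum_(1 <= u < (tarity c).+1) << tcomp c u None >>.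

Lemma brb_None_l c : brb None c = faces c.
Proof. by rewrite /brb (@big_geq _ _ _ 1 1) // subr0. Qed.

Lemma brb_None_r c : brb c None = - faces c.
Proof. by rewrite /brb (@big_geq _ _ _ 1 1) // sub0r. Qed.

(* A face of [b o_t a] erases a leaf of [a], or a leaf of [b] to the left or
   to the right of the grafting position. *)
Lemma faces_graft b a t : (1 <= t <= leaves b)%N ->
  faces (Some (graft b t a)) =
  \sum_(1 <= s < (leaves a).+1) << tcomp (Some b) t (erase a s) >> +
  (\sum_(1 <= x < t) << tcomp (erase b x) t.-1 (Some a) >> +
   \sum_(t.+1 <= x < (leaves b).+1) << tcomp (erase b x) t (Some a) >>).
Proof.
move=> tb; have a_gt0 := leaves_gt0 a.
rewrite /faces /= leaves_graft (_ : (_ - 1).+1 = leaves b + leaves a)%N; last lia.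
rewrite (@big_cat_nat _ _ _ t); [|lia|lia].
rewrite [X in _ + X = _](@big_cat_nat _ _ _ (t + leaves a)); [|lia|lia].
rewrite addrCA; congr (_ + _); [|congr (_ + _)].
- rewrite (_ : t + leaves a = (leaves a).+1 + t.-1)%N; last lia.
  rewrite {1}(_ : t = 1 + t.-1)%N; last lia.
  rewrite big_addn addnK; apply: eq_big_nat => s /andP[s_gt0 sa].
  by rewrite (_ : s + t.-1 = t + s - 1)%N ?erase_graft_within //; lia.
- by apply: eq_big_nat => x /andP[x_gt0 xt]; rewrite erase_graft_before //; lia.
- rewrite (_ : t + leaves a = t.+1 + (leaves a).-1)%N; last lia.
  rewrite (_ : leaves b + leaves a = (leaves b).+1 + (leaves a).-1)%N; last lia.
  rewrite big_addn addnK; apply: eq_big_nat => x /andP[tx xb].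
  by rewrite (_ : x + (leaves a).-1 = x + leaves a - 1)%N ?erase_graft_after //; lia.
Qed.

Lemma sum_faces_tcomp a b :
  \sum_(1 <= t < (tarity b).+1) faces (tcomp b t a) =
  \sum_(1 <= t < (tarity b).+1) \sum_(1 <= s < (tarity a).+1)
     << tcomp b t (tcomp a s None) >> +
  \sum_(1 <= t < (tarity b).+1) \sum_(1 <= u < (tarity (tcomp b t None)).+1)
     << tcomp (tcomp b t None) u a >>.
Proof.
case: b => [b|]; last by rewrite !big_geq // addr0.
case: a => [a|] /=; last first.
  by rewrite [X in _ = X + _]big1 ?add0r // => t _; rewrite big_geq.
have b_gt0 := leaves_gt0 b.
pose F x y : Lam := << tcomp (erase b x) y (Some a) >>.
rewrite (@eq_big_nat _ _ _ 1 (leaves b).+1 _ (fun t =>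
   \sum_(1 <= s < (leaves a).+1) << tcomp (Some b) t (erase a s) >> +
   (\sum_(1 <= x < t) F x t.-1 + \sum_(t.+1 <= x < (leaves b).+1) F x t))); last first.
  exact: faces_graft.
rewrite big_split /= sum_nat_offdiag.
congr (_ + _); apply: eq_big_nat => t _.
by rewrite tarity_erase prednK.
Qed.

Implicit Types (F : top -> Lam) (x y : Lam).

Lemma lbracketE x y : lbracket x y = lin (fun a => lin (brb a) y) x.
Proof.
rewrite /lbracket /lin; apply: eq_bigr => a _; rewrite scaler_sumr.
by apply: eq_bigr => b _; rewrite scalerA.
Qed.

Lemma lbracket_linearl y : linear (lbracket^~ y).
Proof. by move=> c x x'; rewrite !lbracketE linearP. Qed.

Lemma lbracket_linearr x : linear (lbracket x).
Proof. by move=> c y y'; rewrite !lbracketE -lin_funP; apply: eq_lin => a; rewrite linearP. Qed.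

Lemma lbracketU a b : lbracket << a >> << b >> = brb a b.
Proof. by rewrite lbracketE !linU. Qed.

Lemma lbracket_suml I (r : seq I) (g : I -> Lam) y :
  lbracket (\sum_(i <- r) g i) y = \sum_(i <- r) lbracket (g i) y.
Proof. by rewrite lbracketE lin_sum; apply: eq_bigr => i _; rewrite lbracketE. Qed.

Definition delta : Lam -> Lam := lbracket << None >>.

HB.instance Definition _ :=
  GRing.isLinear.Build _ _ _ _ delta (lbracket_linearr << None >>).

Lemma deltaE x : delta x = lin (brb None) x.
Proof. by rewrite /delta lbracketE linU. Qed.

Lemma deltaU c : delta << c >> = faces c.
Proof. by rewrite deltaE linU brb_None_l. Qed.

Lemma delta_brb a b :
  delta (brb a b) = lbracket (delta << a >>) << b >> + lbracket << a >> (delta << b >>).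
Proof.
rewrite deltaE {2}/brb linB !lin_sum.
under eq_bigr do rewrite linU brb_None_l.
under [X in _ - X]eq_bigr do rewrite linU brb_None_l.
rewrite !sum_faces_tcomp !deltaU [faces a]/faces lbracket_suml lbracketE linU lin_sum.
under [in RHS]eq_bigr do rewrite lbracketU.
under [X in _ = _ + X]eq_bigr do rewrite linU.
rewrite /brb !sumrB [X in _ = X - _ + _]exchange_big_nat.
rewrite [X in _ = _ + (_ - X)]exchange_big_nat.
by rewrite opprD [- _ - _]addrC addrACA.
Qed.

Lemma delta_lbracket x y :
  delta (lbracket x y) = lbracket (delta x) y + lbracket x (delta y).
Proof.
move: x y; apply: eq_bilinear => [y c x x' | x c y y' | y c x x' | x c y y' | a b] /=.
- by rewrite lbracket_linearl linearP.
- by rewrite lbracket_linearr linearP.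
- by rewrite linearP !lbracket_linearl scalerDr addrACA.
- by rewrite linearP !lbracket_linearr scalerDr addrACA.
- by rewrite lbracketU delta_brb.
Qed.

Lemma mcoeff_lin F x k : (lin F x)@_k = \sum_(a <- msupp x) x@_a * (F a)@_k.
Proof. by rewrite raddf_sum; apply: eq_bigr => a _; rewrite /= mcoeffZ. Qed.

Lemma mcoeff_delta x k : (delta x)@_k = \sum_(b <- msupp x) x@_b * (faces b)@_k.
Proof. by rewrite deltaE mcoeff_lin; apply: eq_bigr => b _; rewrite brb_None_l. Qed.

Lemma mcoeff_lbracket x y k : (lbracket x y)@_k =
  \sum_(a <- msupp x) \sum_(b <- msupp y) x@_a * y@_b * (brb a b)@_k.
Proof.
rewrite raddf_sum; apply: eq_bigr => a _; rewrite /= raddf_sum.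
by apply: eq_bigr => b _; rewrite /= mcoeffZ.
Qed.

Lemma sum_mcoeff_eq x c : \sum_(a <- msupp x) x@_a * (a == c)%:R = x@_c.
Proof.
rewrite [x in RHS]monalgE raddf_sum; apply: eq_bigr => a _.
by rewrite /= mcoeffU mulr_natr.
Qed.

Lemma sum_graft_comb b a n : a != Leaf ->
  \sum_(1 <= t < (leaves b).+1) (<< Some (graft b t a) >> : Lam)@_(Some (comb n)) =
  (is_comb b && is_comb a && (leaves b + leaves a - 1 == n.+1)%N)%:R.
Proof.
move=> aL; rewrite big_ltn ?ltnS ?leaves_gt0 // big_nat_cond big1 ?addr0; last first.
  move=> t /andP[/andP[t_gt1 tb] _]; have t_neq1 : (t == 1)%N = false by rewrite gtn_eqF.
  rewrite mcoeffU (inj_eq (@Some_inj _)) eq_comb is_comb_graft ?t_neq1 ?andbF //; lia.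
rewrite /= mcoeffU (inj_eq (@Some_inj _)) eq_comb leaves_graft is_comb_graft ?leaves_gt0 //.
by rewrite eqxx andbT.
Qed.

Lemma mcoeff_brb_comb_trees n a b : (0 < n)%N ->
  (brb (Some a) (Some b))@_(Some (comb n)) =
  n%:R * ((a == Leaf)%:R * (b == comb n)%:R - (a == comb n)%:R * (b == Leaf)%:R).
Proof.
move=> n_gt0; have Leaf_comb : (Leaf == comb n) = false by case: n n_gt0.
rewrite /brb /= mcoeffB !raddf_sum /= sumrN.
have [->|aL] := eqVneq a Leaf.
  under eq_bigr do rewrite graft_Leaf mcoeffU (inj_eq (@Some_inj _)).
  rewrite big_nat1 /= mcoeffU (inj_eq (@Some_inj _)) sumr_const_nat Leaf_comb subn1 /=.
  case: eqP => [->|_]; last by rewrite /= !mul0rn; ring.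
  by rewrite leaves_comb /=; ring.
have [->|bL] := eqVneq b Leaf.
  under [X in _ - X]eq_bigr do rewrite graft_Leaf mcoeffU (inj_eq (@Some_inj _)).
  rewrite big_nat1 /= mcoeffU (inj_eq (@Some_inj _)) sumr_const_nat eq_sym Leaf_comb /=.
  case: eqP => [<-|_]; last by rewrite /= !mul0rn; ring.
  by rewrite leaves_comb subn1 /=; ring.
(* Both sums now test that [a] and [b] are combs of total size [n.+2]. *)
rewrite !sum_graft_comb // [is_comb a && _]andbC [(leaves a + _)%N]addnC subrr.
by rewrite !mul0r mulr0 subrr mulr0.
Qed.

Lemma mcoeff_brb_comb n a b : (0 < n)%N ->
  let c := Some (comb n) in
  (brb a b)@_c =
  n%:R * ((a == Some Leaf)%:R * (b == c)%:R - (a == c)%:R * (b == Some Leaf)%:R)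
  + (a == None)%:R * (faces b)@_c - (b == None)%:R * (faces a)@_c.
Proof.
move=> n_gt0 c; case: a => [a|]; case: b => [b|].
- by rewrite mcoeff_brb_comb_trees // !(inj_eq (@Some_inj _)) /=; ring.
- by rewrite brb_None_r mcoeffN /=; ring.
- by rewrite brb_None_l /=; ring.
- by rewrite brb_None_l /faces big_geq // mcoeff0 /=; ring.
Qed.

Lemma mcoeff_lbracket_comb n x y : (0 < n)%N ->
  let c := Some (comb n) in
  (lbracket x y)@_c =
  n%:R * (x@_(Some Leaf) * y@_c - x@_c * y@_(Some Leaf))
  + x@_None * (delta y)@_c - y@_None * (delta x)@_c.
Proof.
move=> n_gt0 c; rewrite mcoeff_lbracket.
have inner a : \sum_(b <- msupp y) x@_a * y@_b * (brb a b)@_c =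
    x@_a * (n%:R * ((a == Some Leaf)%:R * y@_c - (a == c)%:R * y@_(Some Leaf))
            + (a == None)%:R * (delta y)@_c - y@_None * (faces a)@_c).
  rewrite (eq_bigr (fun b =>
      x@_a * n%:R * (a == Some Leaf)%:R * (y@_b * (b == c)%:R)
      - x@_a * n%:R * (a == c)%:R * (y@_b * (b == Some Leaf)%:R)
      + x@_a * (a == None)%:R * (y@_b * (faces b)@_c)
      - x@_a * (faces a)@_c * (y@_b * (b == None)%:R))); last first.
    by move=> b _; rewrite mcoeff_brb_comb //; ring.
  by rewrite sumrB big_split sumrB /= -!mulr_sumr !sum_mcoeff_eq -mcoeff_delta; ring.
rewrite (eq_bigr _ (fun a _ => inner a)).
rewrite (eq_bigr (fun a =>
    n%:R * y@_c * (x@_a * (a == Some Leaf)%:R)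
    - n%:R * y@_(Some Leaf) * (x@_a * (a == c)%:R)
    + (delta y)@_c * (x@_a * (a == None)%:R)
    - y@_None * (x@_a * (faces a)@_c))); last by move=> a _; ring.
by rewrite sumrB big_split sumrB /= -!mulr_sumr !sum_mcoeff_eq -mcoeff_delta; ring.
Qed.

Definition arity_bounded n x := forall a, (n < tarity a)%N -> x@_a = 0.

Definition max_arity x := (\max_(a <- msupp x) tarity a)%N.

Lemma arity_bounded_max x : arity_bounded (max_arity x) x.
Proof.
move=> a xa; apply: mcoeff_outdom; apply: contraTN xa => a_x.
by rewrite -leqNgt (@leq_bigmax_seq _ _ xpredT tarity _ a_x).
Qed.

Lemma arity_bounded_le m n x : arity_bounded m x -> (m <= n)%N -> arity_bounded n x.
Proof. by move=> xm mn a na; apply: xm; apply: leq_ltn_trans na. Qed.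

Lemma tarity_tcomp_None b u : (tarity (tcomp b u None) <= tarity b)%N.
Proof. by case: b => [b|] //=; rewrite tarity_erase leq_pred. Qed.

Lemma arity_bounded_delta n x : arity_bounded n x -> arity_bounded n (delta x).
Proof.
move=> xn a na; rewrite mcoeff_delta big1_seq // => b _.
have [bn|nb] := leqP (tarity b) n; last by rewrite xn // mul0r.
rewrite raddf_sum big1 ?mulr0 // => u _ /=; rewrite mcoeffU.
case: eqP => // ua; have := tarity_tcomp_None b u; rewrite ua; lia.
Qed.

Lemma iter_deltaD k : {morph iter k delta : x y / x + y}.
Proof. by elim: k => // k IH x y; rewrite !iterS IH linearD. Qed.

Lemma iter_deltaZ k c x : iter k delta (c *: x) = c *: iter k delta x.
Proof. by elim: k => // k IH; rewrite !iterS IH linearZ. Qed.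

Definition comb_free n x := forall k, (iter k delta x)@_(Some (comb n)) = 0.

Lemma arity_bounded_comb_free n x : arity_bounded n x -> comb_free n x.
Proof.
move=> xn k; suff : arity_bounded n (iter k delta x) by apply; rewrite /= leaves_comb.
by elim: k => // k; rewrite iterS; apply: arity_bounded_delta.
Qed.

Lemma comb_free_delta n x : comb_free n x -> comb_free n (delta x).
Proof. by move=> xn k; rewrite -iterSr. Qed.

Lemma comb_free_lbracket n x y : (0 < n)%N ->
  comb_free n x -> comb_free n y -> comb_free n (lbracket x y).
Proof.
move=> n_gt0 xn yn k; elim: k x y xn yn => [|k IH] x y xn yn.
  by rewrite /= mcoeff_lbracket_comb // (xn 0%N) (yn 0%N) (xn 1%N) (yn 1%N); ring.
rewrite iterSr delta_lbracket iter_deltaD mcoeffD.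
by rewrite (IH _ _ (comb_free_delta xn) yn) (IH _ _ xn (comb_free_delta yn)) addr0.
Qed.

Lemma lie_gen_comb_free S n x : (0 < n)%N ->
  (forall s, s \in S -> comb_free n s) -> lie_gen S x -> comb_free n x.
Proof.
move=> n_gt0 Sn; elim => {x} [s /Sn //| k | x y _ xn _ yn k | c x _ xn k |].
- by rewrite -(scale0r 0) iter_deltaZ scale0r mcoeff0.
- by rewrite iter_deltaD mcoeffD xn yn addr0.
- by rewrite iter_deltaZ mcoeffZ xn mulr0.
- by move=> x y _ xn _ yn; apply: comb_free_lbracket.
Qed.

Theorem theorem5p1 :
  ~ (exists S : seq Lam, forall x : Lam, lie_gen S x).
Proof.
move=> [S genS]; pose n := (\max_(s <- S) max_arity s).+1.
have Sn s : s \in S -> comb_free n s.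
  move=> sS; have sn : (max_arity s <= n)%N.
    exact/leqW/(@leq_bigmax_seq _ _ xpredT max_arity).
  exact: arity_bounded_comb_free (arity_bounded_le (@arity_bounded_max s) sn).
have /(_ 0%N) := lie_gen_comb_free (isT : (0 < n)%N) Sn (genS << Some (comb n) >>).
by rewrite mcoeffUU => /eqP; rewrite oner_eq0.
Qed.
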